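(* Let $\Sigma\subset\mathbb{R}^{n+1}$ be a pure, hereditary, $(n+1)$-dimensional fan with smoothness parameters $\alpha$. Then $H_{n+1}(\mathcal{R}/\mathcal{J}[\Sigma,\Sigma^{-1}])=C^\alpha(\Sigma)$.
   Context: $S=\mathbb{R}[x_0,\ldots,x_n]$. A cone is the positive hull of finitely many vectors, of dimension that of its linear span $\mathrm{aff}(\gamma)$; a fan is a finite set of cones closed under faces, any two meeting in a common face; $\Sigma_i$ = $i$-dim cones, facets = maximal cones; pure: all facets of dim $n+1$; hereditary: for every face $\psi$ the graph on facets containing $\psi$ with edges for pairs meeting in an $n$-face is connected; $\partial\Sigma$ = subfan of faces contained in an $n$-face lying in exactly one facet; others interior. $l_\tau$ generates the ideal of $\mathrm{aff}(\tau)$. Smoothness parameters: integers $\alpha(\tau)\ge-1$ ($\tau\in\Sigma_n$), $\ge0$ on interior $\tau$; $\Sigma^{-1}$ = subfan of $\partial\Sigma$ of cones contained in some $\tau$ with $\alpha(\tau)=-1$; $J(\tau)=\langle l_\tau^{\alpha(\tau)+1}\rangle$ for $\tau\in\Sigma_n\setminus\Sigma^{-1}_n$, $J(\gamma)=\sum_{\tau\in\Sigma_n\setminus\Sigma^{-1}_n,\gamma\subseteq\tau}J(\tau)$ for non-facets, $J(\sigma)=0$ for facets. With $u_\rho$ unit ray generators, $P(\gamma)=\mathrm{conv}(\{0\}\cup\{u_\rho:\rho\subseteq\gamma\})$, $\mathrm{lk}(\gamma)=\mathrm{conv}\{u_\rho\}$; $\mathcal{R}/\mathcal{J}[\Sigma,\Sigma^{-1}]_i=\bigoplus_{\gamma\in\Sigma_i\setminus\Sigma^{-1}_i}S/J(\gamma)$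 ($0\le i\le n+1$) with differential induced by the cellular boundary of the relative cellular chain complex of $(P(\Sigma),\mathrm{lk}(\Sigma)\cup P(\Sigma^{-1}))$ with $S$ coefficients. The spline module $C^\alpha(\Sigma)$ is the set of tuples $(F_\sigma)_{\sigma\in\Sigma_{n+1}}\in\bigoplus_{\sigma\in\Sigma_{n+1}}S$ such that $l_\tau^{\alpha(\tau)+1}\mid F_{\sigma_1}-F_{\sigma_2}$ whenever $\sigma_1\cap\sigma_2=\tau\in\Sigma_n$, and $l_\tau^{\alpha(\tau)+1}\mid F_\sigma$ whenever $\tau\in\Sigma_n\cap\partial\Sigma$ and $\tau\subseteq\sigma$. *)

From HB Require Import structures.
From mathcomp Require Import all_boot all_order all_algebra.
From mathcomp Require Import reals.
From mathcomp Require Import mpoly.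
From Stdlib Require Import ClassicalEpsilon Relation_Operators.

Set Implicit Arguments.
Unset Strict Implicit.
Unset Printing Implicit Defensive.

Import Order.TTheory GRing.Theory Num.Theory.
Local Open Scope ring_scope.

Definition pb (P : Prop) : bool :=
  if excluded_middle_informative P then true else false.

Section Fans.
Variables (R : realType) (n : nat).

Notation vec := 'rV[R]_(n.+1).

Definition dotv (w x : vec) : R := \sum_(i < n.+1) w 0 i * x 0 i.

Definition poshull (g : seq vec) (x : vec) : Prop :=
  exists c : 'I_(size g) -> R,
    (forall i, 0 <= c i) /\ x = \sum_(i < size g) c i *: g`_i.

Definition gens_mx (g : seq vec) : 'M[R]_(size g, n.+1) :=
  \matrix_(i < size g, j < n.+1) (g`_i) 0 j.
Definition cdim (g : seq vec) : nat := \rank (gens_mx g).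

Definition subsetv (A B : vec -> Prop) := forall x, A x -> B x.
Definition eqsetv (A B : vec -> Prop) := forall x, A x <-> B x.

Definition is_face (C F : vec -> Prop) : Prop :=
  exists w : vec, (forall x, C x -> 0 <= dotv w x) /\
                  eqsetv F (fun x => C x /\ dotv w x = 0).

(* A fan, given as a finite family of pairwise distinct cones indexed by 'I_m *)
Definition is_fan (m : nat) (G : 'I_m -> seq vec) : Prop :=
  [/\ (forall i j, eqsetv (poshull (G i)) (poshull (G j)) -> i = j),
      (forall i F, is_face (poshull (G i)) F ->
                   exists j, eqsetv (poshull (G j)) F) &
      (forall i j, is_face (poshull (G i)) (fun x => poshull (G i) x /\ poshull (G j) x)
                /\ is_face (poshull (G j)) (fun x => poshull (G i) x /\ poshull (G j) x))].

Section OnFan.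
Variables (m : nat) (G : 'I_m -> seq vec).

Definition cone (i : 'I_m) := poshull (G i).
Definition sub (i j : 'I_m) := subsetv (cone i) (cone j).

Definition is_facet (i : 'I_m) : Prop := forall j, sub i j -> sub j i.

Definition pure : Prop := forall i, is_facet i -> cdim (G i) = n.+1.

Definition hered_adj (psi : 'I_m) (i j : 'I_m) : Prop :=
  [/\ is_facet i, is_facet j, sub psi i, sub psi j &
   exists k, cdim (G k) = n /\
     eqsetv (fun x => cone i x /\ cone j x) (cone k)].

Definition hereditary : Prop :=
  forall psi i j, is_facet i -> is_facet j -> sub psi i -> sub psi j ->
    clos_refl_trans _ (hered_adj psi) i j.

Definition in_one_facet (t : 'I_m) : Prop :=
  exists s, is_facet s /\ sub t s /\ (forall s', is_facet s' -> sub t s' -> s' = s).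

Definition in_boundary (g : 'I_m) : Prop :=
  exists t, cdim (G t) = n /\ sub g t /\ in_one_facet t.

Definition interior (g : 'I_m) : Prop := ~ in_boundary g.

Definition smoothness (alpha : 'I_m -> int) : Prop :=
  forall t, cdim (G t) = n ->
    (-1 <= alpha t) /\ (interior t -> 0 <= alpha t).

Definition in_Sm1 (alpha : 'I_m -> int) (g : 'I_m) : Prop :=
  in_boundary g /\
  exists t, [/\ cdim (G t) = n, in_boundary t, alpha t = -1 & sub g t].

(* l : 'I_m -> vec is a valid choice of normal vectors: for each n-cone tau,
   the linear form x |-> <l tau, x> generates the ideal of aff(tau). *)
Definition normals (l : 'I_m -> vec) : Prop :=
  forall t, cdim (G t) = n ->
    l t != 0 /\ forall x, cone t x -> dotv (l t) x = 0.

Definition lpoly (l : 'I_m -> vec) (t : 'I_m) : {mpoly R[n.+1]} :=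
  \sum_(i < n.+1) (l t) 0 i *: 'X_i.

Definition lpow (l : 'I_m -> vec) (alpha : 'I_m -> int) (t : 'I_m) :=
  lpoly l t ^+ absz (alpha t + 1).

Definition mdvd (p q : {mpoly R[n.+1]}) : Prop := exists r, q = r * p.

Definition in_J (l : 'I_m -> vec) (alpha : 'I_m -> int) (g : 'I_m)
    (p : {mpoly R[n.+1]}) : Prop :=
  (cdim (G g) = n.+1 /\ p = 0) \/
  (~ (cdim (G g) = n.+1) /\
   exists q : 'I_m -> {mpoly R[n.+1]},
     (forall t, ~ (cdim (G t) = n /\ ~ in_Sm1 alpha t /\ sub g t) -> q t = 0) /\
     p = \sum_(t < m) q t * lpow l alpha t).

(* cellular incidence number [P(sigma) : P(tau)] of the relative complex, for
   sigma of dim n+1 (oriented by the standard orientation of R^{n+1}) and tau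
   of dim n (co-oriented by the normal l tau) *)
Definition incid (l : 'I_m -> vec) (s t : 'I_m) : R :=
  if (cdim (G s) == n.+1) && (cdim (G t) == n) && pb (sub t s) then
    (if has (fun g => 0 < dotv (l t) g) (G s) then 1 else -1)
  else 0.

(* elements of  (+)_{sigma in Sigma_{n+1}} S  *)
Definition top_chain (F : 'I_m -> {mpoly R[n.+1]}) : Prop :=
  forall i, cdim (G i) != n.+1 -> F i = 0.

(* top differential  d_{n+1} : R/J_{n+1} -> R/J_n , component at tau *)
Definition dtop (l : 'I_m -> vec) (F : 'I_m -> {mpoly R[n.+1]}) (t : 'I_m)
    : {mpoly R[n.+1]} :=
  \sum_(s < m) incid l s t *: F s.

(* H_{n+1}(R/J[Sigma, Sigma^{-1}]) = ker d_{n+1}  (there are no (n+2)-cells) *)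
Definition Htop (l : 'I_m -> vec) (alpha : 'I_m -> int)
    (F : 'I_m -> {mpoly R[n.+1]}) : Prop :=
  top_chain F /\
  forall t, cdim (G t) = n -> ~ in_Sm1 alpha t -> in_J l alpha t (dtop l F t).

Definition spline (l : 'I_m -> vec) (alpha : 'I_m -> int)
    (F : 'I_m -> {mpoly R[n.+1]}) : Prop :=
  [/\ top_chain F,
   (forall s1 s2 t, cdim (G s1) = n.+1 -> cdim (G s2) = n.+1 -> cdim (G t) = n ->
      eqsetv (fun x => cone s1 x /\ cone s2 x) (cone t) ->
      mdvd (lpow l alpha t) (F s1 - F s2)) &
   (forall s t, cdim (G s) = n.+1 -> cdim (G t) = n -> in_boundary t -> sub t s ->
      mdvd (lpow l alpha t) (F s))].

End OnFan.
End Fans.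

From HB Require Import structures.
From mathcomp Require Import all_boot all_order all_algebra.
From mathcomp Require Import reals.
From mathcomp Require Import mpoly.
From Stdlib Require Import ClassicalEpsilon Classical.
From mathcomp Require Import lra.

(* Since there are no (n+2)-cells, H_{n+1} is the kernel of d_{n+1} modulo the
   ideals J(tau).  Two distinct top cones containing an n-cone tau lie on
   opposite sides of the hyperplane aff(tau), so their incidence numbers with
   tau are opposite signs; in particular at most two top cones contain tau, and
   if there are two they meet exactly in tau.  Hence the tau-component of
   d_{n+1} F is +-(F_s1 - F_s2) for an interior tau, +-F_s for a boundary tau,
   and membership in J(tau) is divisibility by l_tau^(alpha(tau)+1), which is
   vacuous on Sigma^{-1}.  These are exactly the spline conditions. *)

Set Implicit Arguments.
Unset Strict Implicit.
Unset Printing Implicit Defensive.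
Import Order.TTheory GRing.Theory Num.Theory.
Local Open Scope ring_scope.

Lemma pbP (P : Prop) : pb P = true <-> P.
Proof. by rewrite /pb; case: excluded_middle_informative. Qed.

Section LinearAlgebra.
Variables (R : realType) (n : nat).
Notation vec := 'rV[R]_(n.+1).

Lemma dotvC (w x : vec) : dotv w x = dotv x w.
Proof. by rewrite /dotv; apply: eq_bigr => i _; rewrite mulrC. Qed.

Lemma dotvDr (w x y : vec) : dotv w (x + y) = dotv w x + dotv w y.
Proof. by rewrite /dotv -big_split; apply: eq_bigr => i _; rewrite !mxE mulrDr. Qed.

Lemma dotvZr (w x : vec) a : dotv w (a *: x) = a * dotv w x.
Proof. by rewrite /dotv mulr_sumr; apply: eq_bigr => i _; rewrite !mxE mulrCA. Qed.

Lemma dotvNr (w x : vec) : dotv w (- x) = - dotv w x.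
Proof. by rewrite -scaleN1r dotvZr mulN1r. Qed.

Lemma dotvBr (w x y : vec) : dotv w (x - y) = dotv w x - dotv w y.
Proof. by rewrite dotvDr dotvNr. Qed.

Lemma dotvZl (w x : vec) a : dotv (a *: w) x = a * dotv w x.
Proof. by rewrite dotvC dotvZr dotvC. Qed.

Lemma dotvNl (w x : vec) : dotv (- w) x = - dotv w x.
Proof. by rewrite dotvC dotvNr dotvC. Qed.

Lemma dotvBl (w v x : vec) : dotv (w - v) x = dotv w x - dotv v x.
Proof. by rewrite dotvC dotvBr !(dotvC x). Qed.

Lemma dotv0l (x : vec) : dotv 0 x = 0.
Proof. by rewrite /dotv big1 // => i _; rewrite mxE mul0r. Qed.

Lemma dotv_sumr (w : vec) k (c : 'I_k -> R) (g : 'I_k -> vec) :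
  dotv w (\sum_(i < k) c i *: g i) = \sum_(i < k) c i * dotv w (g i).
Proof.
elim/big_ind2: _ => [|x1 x2 y1 y2 <- <-|i _]; last by rewrite dotvZr.
  by rewrite dotvC dotv0l.
by rewrite dotvDr.
Qed.

Lemma dotvv_eq0 (w : vec) : dotv w w = 0 -> w = 0.
Proof.
move/eqP; rewrite psumr_eq0 => [/allP wi0|i _]; last by rewrite -expr2 sqr_ge0.
apply/rowP => j; rewrite mxE.
by have /implyP/(_ isT) := wi0 j (mem_index_enum j); rewrite mulf_eq0 orbb => /eqP.
Qed.

Definition orthv (w : vec) (g : seq vec) := forall i : 'I_(size g), dotv w g`_i = 0.

Lemma orthv_mul0 (g : seq vec) (w : vec) : orthv w g -> gens_mx g *m w^T = 0.
Proof.
move=> wg; apply/matrixP => i j; rewrite ord1 [RHS]mxE -(wg i) mxE.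
by apply: eq_bigr => k _; rewrite !mxE mulrC.
Qed.

Lemma row_full_mul0 k (M : 'M[R]_(k, n.+1)) (w : vec) :
  row_full M -> M *m w^T = 0 -> w = 0.
Proof.
move=> /row_fullP [D DM] Mw; apply: trmx_inj.
by rewrite trmx0 -[w^T]mul1mx -DM -mulmxA Mw mulmx0.
Qed.

Lemma row_full_col_mx k (A : 'M[R]_(k, n.+1)) (v : vec) :
  \rank A = n -> ~~ (v <= A)%MS -> row_full (col_mx A v).
Proof.
move=> rkA vA; rewrite /row_full eqn_leq rank_leq_col /=.
have A_lt : (A < col_mx A v)%MS.
  rewrite ltmxE -addsmxE addsmxSl /=.
  by apply: contra vA; rewrite col_mx_sub => /andP [].
by have := rank_ltmx A_lt; rewrite rkA.
Qed.

Lemma submx_gens (g : seq vec) (v : vec) :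
  (v <= gens_mx g)%MS -> exists d : 'I_(size g) -> R, v = \sum_(i < size g) d i *: g`_i.
Proof.
case/submxP => D ->; exists (D 0); apply/rowP => j.
by rewrite !mxE summxE; apply: eq_bigr => i _; rewrite !mxE.
Qed.

Lemma orthv_full_eq0 (g : seq vec) (w : vec) : cdim g = n.+1 -> orthv w g -> w = 0.
Proof. by move=> rkg /orthv_mul0; apply: row_full_mul0; apply/eqP. Qed.

Lemma orthv_corank1_eq0 (g : seq vec) (v w : vec) :
  cdim g = n -> ~~ (v <= gens_mx g)%MS -> orthv w g -> dotv w v = 0 -> w = 0.
Proof.
move=> rkg vg /orthv_mul0 wg wv; apply: row_full_mul0 (row_full_col_mx rkg vg) _.
rewrite mul_col_mx wg; have -> : v *m w^T = 0.
  apply/matrixP => i j; rewrite !ord1 [RHS]mxE -wv mxE dotvC.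
  by apply: eq_bigr => k _; rewrite !mxE.
by rewrite col_mx0.
Qed.

Section Corank1.
Variables (g : seq vec) (l0 : vec).
Hypotheses (rkg : cdim g = n) (l0_neq0 : l0 != 0) (l0g : orthv l0 g).

Lemma orthv_corank1_span (h : vec) :
  dotv l0 h = 0 -> exists d : 'I_(size g) -> R, h = \sum_(i < size g) d i *: g`_i.
Proof.
move=> l0h; apply: submx_gens; apply/negPn/negP => hg.
by move: l0_neq0; rewrite (orthv_corank1_eq0 rkg hg l0g l0h) eqxx.
Qed.

Lemma orthv_corank1_line (w : vec) : orthv w g -> exists c, w = c *: l0.
Proof.
move=> wg; have l0l0 : dotv l0 l0 != 0 by apply: contra l0_neq0 => /eqP/dotvv_eq0 ->.
have l0_span : ~~ (l0 <= gens_mx g)%MS.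
  apply/negP => /submx_gens [d l0E]; move: l0l0.
  by rewrite {2}l0E dotv_sumr big1 ?eqxx // => i _; rewrite l0g mulr0.
exists (dotv w l0 / dotv l0 l0); apply/eqP; rewrite -subr_eq0; apply/eqP.
apply: (orthv_corank1_eq0 rkg l0_span).
  by move=> i; rewrite dotvBl dotvZl wg l0g mulr0 subr0.
by rewrite dotvBl dotvZl mulfVK ?subrr.
Qed.

End Corank1.

Lemma poshull_nth (g : seq vec) (i : 'I_(size g)) : poshull g g`_i.
Proof.
exists (fun j => (j == i)%:R); split=> [j|]; first by rewrite ler0n.
rewrite (bigD1 i) //= eqxx scale1r big1 ?addr0 // => j /negbTE ->.
by rewrite scale0r.
Qed.

Lemma poshull_mem (g : seq vec) x : x \in g -> poshull g x.
Proof.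
move=> xg; rewrite -(nth_index 0 xg).
by apply: (poshull_nth (Ordinal _)); rewrite index_mem.
Qed.

Lemma poshullD (g : seq vec) x y : poshull g x -> poshull g y -> poshull g (x + y).
Proof.
case=> [c [c0 ->]] [d [d0 ->]]; exists (fun i => c i + d i); split.
  by move=> i; rewrite addr_ge0.
by rewrite -big_split; apply: eq_bigr => i _; rewrite scalerDl.
Qed.

Lemma poshullZ (g : seq vec) a x : 0 <= a -> poshull g x -> poshull g (a *: x).
Proof.
move=> a0 [c [c0 ->]]; exists (fun i => a * c i); split.
  by move=> i; rewrite mulr_ge0.
by rewrite scaler_sumr; apply: eq_bigr => i _; rewrite scalerA.
Qed.

End LinearAlgebra.

Section Fan.
Variables (R : realType) (n m : nat) (G : 'I_m -> seq 'rV[R]_(n.+1))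
  (l : 'I_m -> 'rV[R]_(n.+1)).
Hypotheses (fanG : is_fan G) (normG : normals G l).

Lemma cone_meet_face i j : exists w, forall x, cone G i x -> (cone G j x <-> dotv w x = 0).
Proof.
case: fanG => _ _ /(_ i j) [[w [_ ijw]] _]; exists w => x xi; split => [xj|wx].
  by case: ((ijw x).1 (conj xi xj)).
by case: ((ijw x).2 (conj xi wx)).
Qed.

Lemma cone_inj i j : sub G i j -> sub G j i -> i = j.
Proof. by case: fanG => inj _ _ ij ji; apply: inj => x; split; [apply: ij | apply: ji]. Qed.

Lemma top_cone_facet s : cdim (G s) = n.+1 -> is_facet G s.
Proof.
move=> rks j sj; have [w jsw] := cone_meet_face j s.
have w0 : w = 0.
  apply: (orthv_full_eq0 rks) => k.
  by apply/(jsw _ (sj _ (poshull_nth k))); apply: poshull_nth.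
by move=> x xj; apply/(jsw x xj); rewrite w0 dotv0l.
Qed.

Definition is_normal (t : 'I_m) (l0 : 'rV[R]_(n.+1)) :=
  l0 != 0 /\ forall x, cone G t x -> dotv l0 x = 0.

Lemma is_normalN t l0 : is_normal t l0 -> is_normal t (- l0).
Proof. by case=> l0_neq0 l0t; split=> [|x /l0t]; rewrite ?oppr_eq0 // dotvNl => ->; rewrite oppr0. Qed.

Lemma normal_line t l0 w : cdim (G t) = n -> is_normal t l0 ->
  (forall x, cone G t x -> dotv w x = 0) -> exists c, w = c *: l0.
Proof.
move=> rkt [l0_neq0 l0t] wt.
by apply: (orthv_corank1_line rkt l0_neq0) => k; [apply: l0t | apply: wt]; apply: poshull_nth.
Qed.

Lemma face_normal s j t l0 : cdim (G t) = n -> is_normal t l0 -> sub G t s -> sub G t j ->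
  exists c, forall x, cone G s x -> (cone G j x <-> c * dotv l0 x = 0).
Proof.
move=> rkt l0t ts tj; have [w sjw] := cone_meet_face s j.
have [c wE] : exists c, w = c *: l0.
  by apply: (normal_line rkt l0t) => x xt; apply/(sjw x (ts x xt)); apply: tj.
by exists c => x xs; rewrite -dotvZl -wE; apply: sjw.
Qed.

Lemma n_cone_sub_eq t t' : cdim (G t) = n -> cdim (G t') = n -> sub G t t' -> t = t'.
Proof.
move=> rkt rkt' tt'.
have [c tt'c] := face_normal rkt (normG rkt) tt' (fun x (xt : cone G t x) => xt).
have [c' lt'E] := normal_line rkt (normG rkt) (fun x xt => (normG rkt').2 x (tt' x xt)).
apply: cone_inj => // x xt'; apply/(tt'c x xt').
have := (normG rkt').2 x xt'; rewrite lt'E dotvZl => /eqP.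
rewrite mulf_eq0 => /orP [/eqP c'0|/eqP ->]; last by rewrite mulr0.
by move: (normG rkt').1; rewrite lt'E c'0 scale0r eqxx.
Qed.

Section TopCones.
Variables (s1 s2 t : 'I_m) (l0 : 'rV[R]_(n.+1)).
Hypotheses (rks1 : cdim (G s1) = n.+1) (rkt : cdim (G t) = n) (l0t : is_normal t l0)
  (ts1 : sub G t s1) (ts2 : sub G t s2).

Lemma top_cones_eq_of_common_point y :
  cone G s1 y -> cone G s2 y -> dotv l0 y != 0 -> s1 = s2.
Proof.
move=> ys1 ys2 l0y; have [c s12c] := face_normal rkt l0t ts1 ts2.
have c0 : c = 0.
  by move/(s12c y ys1)/eqP: ys2; rewrite mulf_eq0 (negbTE l0y) orbF => /eqP.
have s12 : sub G s1 s2 by move=> x xs1; apply/(s12c x xs1); rewrite c0 mul0r.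
exact: cone_inj s12 (top_cone_facet rks1 s12).
Qed.

(* u - a v lies on the hyperplane, hence in the span of t, so adding a suitable
   point x0 of t lands in t; then x0 + u lies in both cones. *)
Lemma common_point_off_hyperplane u v : cone G s1 u -> cone G s2 v ->
  0 < dotv l0 u -> 0 < dotv l0 v -> exists y, [/\ cone G s1 y, cone G s2 y & dotv l0 y != 0].
Proof.
move=> us1 vs2 l0u l0v; have [l0_neq0 l0_orth] := l0t.
pose a := dotv l0 u / dotv l0 v.
have l0h : dotv l0 (u - a *: v) = 0 by rewrite dotvBr dotvZr mulfVK ?subrr // gt_eqF.
have [d hE] := orthv_corank1_span rkt l0_neq0 (fun k => l0_orth _ (poshull_nth k)) l0h.
pose x0 := \sum_(i < size (G t)) `|d i| *: (G t)`_i.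
have x0t : cone G t x0 by exists (fun i => `|d i|); split.
have x0ht : cone G t (x0 + (u - a *: v)).
  exists (fun i => `|d i| + d i); split => [i|].
    by case: (lerP 0 (d i)) => di; [rewrite addr_ge0 | rewrite ltr0_norm // addNr].
  by rewrite hE -big_split; apply: eq_bigr => i _; rewrite scalerDl.
exists (x0 + u); split.
- by apply: poshullD => //; apply: ts1.
- rewrite -[x0 + u](subrK (a *: v)) -[x0 + u - a *: v]addrA.
  apply: poshullD; first by apply: ts2.
  by apply: poshullZ => //; rewrite divr_ge0 // ltW.
- by rewrite dotvDr l0_orth // add0r gt_eqF.
Qed.

End TopCones.

Lemma top_cones_same_side s1 s2 t l0 u v :
  cdim (G s1) = n.+1 -> cdim (G t) = n -> is_normal t l0 -> sub G t s1 -> sub G t s2 ->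
  cone G s1 u -> cone G s2 v -> 0 < dotv l0 u -> 0 < dotv l0 v -> s1 = s2.
Proof.
move=> rks1 rkt l0t ts1 ts2 us1 vs2 l0u l0v.
have [y [ys1 ys2 l0y]] := common_point_off_hyperplane rkt l0t ts1 ts2 us1 vs2 l0u l0v.
exact: (top_cones_eq_of_common_point rks1 rkt l0t ts1 ts2 ys1 ys2 l0y).
Qed.

Lemma top_cones_meet s1 s2 t : cdim (G s1) = n.+1 -> s1 != s2 -> cdim (G t) = n ->
  sub G t s1 -> sub G t s2 -> forall x, cone G s1 x -> cone G s2 x -> cone G t x.
Proof.
move=> rks1 s12 rkt ts1 ts2 x xs1 xs2.
have ltx : dotv (l t) x = 0.
  have [//|ltx] := eqVneq (dotv (l t) x) 0; move/eqP: s12; case.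
  exact: top_cones_eq_of_common_point rks1 rkt (normG rkt) ts1 ts2 x xs1 xs2 ltx.
have [c s1tc] := face_normal rkt (normG rkt) ts1 (fun y (yt : cone G t y) => yt).
by apply/(s1tc x xs1); rewrite ltx mulr0.
Qed.

Lemma top_cone_neg_gen s w : cdim (G s) = n.+1 -> w != 0 ->
  ~~ has (fun g => 0 < dotv w g) (G s) -> exists2 u, cone G s u & 0 < dotv (- w) u.
Proof.
move=> rks w_neq0 /hasPn w_npos.
have [k wk] : exists k : 'I_(size (G s)), dotv w (G s)`_k != 0.
  apply/existsP; apply: contraT => /existsPn wg.
  by move: w_neq0; rewrite (orthv_full_eq0 rks (fun k => eqP (negbNE (wg k)))) eqxx.
exists (G s)`_k; first exact: poshull_nth.
by rewrite dotvNl oppr_gt0 lt_neqAle wk leNgt w_npos // mem_nth.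
Qed.

Lemma incidE s t : cdim (G s) = n.+1 -> cdim (G t) = n -> sub G t s ->
  incid G l s t = if has (fun g => 0 < dotv (l t) g) (G s) then 1 else -1.
Proof. by move=> rks rkt ts; rewrite /incid rks rkt !eqxx (pbP _).2. Qed.

Lemma incid_eq0 s t : ~ (cdim (G s) = n.+1 /\ sub G t s) -> incid G l s t = 0.
Proof.
rewrite /incid => not_ts; case: eqP => //= rks; case: eqP => //= _.
by case ts: (pb _) => //; case: not_ts; split=> //; apply/pbP.
Qed.

Lemma incid_sign s t : cdim (G s) = n.+1 -> cdim (G t) = n -> sub G t s ->
  incid G l s t = 1 \/ incid G l s t = -1.
Proof. by move=> rks rkt ts; rewrite incidE //; case: has; [left | right]. Qed.

Lemma incid_neq0 s t : cdim (G s) = n.+1 -> cdim (G t) = n -> sub G t s ->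
  incid G l s t != 0.
Proof. by move=> rks rkt ts; case: (incid_sign rks rkt ts) => ->; rewrite ?oppr_eq0 oner_eq0. Qed.

Lemma incid_opp s1 s2 t : cdim (G s1) = n.+1 -> cdim (G s2) = n.+1 -> s1 != s2 ->
  cdim (G t) = n -> sub G t s1 -> sub G t s2 -> incid G l s1 t = - incid G l s2 t.
Proof.
move=> rks1 rks2 s12 rkt ts1 ts2; rewrite !incidE //.
case pos1: has; case pos2: has; rewrite ?opprK //; exfalso; move/eqP: s12; apply.
- move/hasP: pos1 => [u /poshull_mem us1 ltu]; move/hasP: pos2 => [v /poshull_mem vs2 ltv].
  exact: top_cones_same_side rks1 rkt (normG rkt) ts1 ts2 us1 vs2 ltu ltv.
- have [u us1 ltu] := top_cone_neg_gen rks1 (normG rkt).1 (negbT pos1).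
  have [v vs2 ltv] := top_cone_neg_gen rks2 (normG rkt).1 (negbT pos2).
  exact: top_cones_same_side rks1 rkt (is_normalN (normG rkt)) ts1 ts2 us1 vs2 ltu ltv.
Qed.

(* Three pairwise opposite signs in {1, -1} cannot exist. *)
Lemma no_third_top_cone s1 s2 s3 t :
  cdim (G s1) = n.+1 -> cdim (G s2) = n.+1 -> cdim (G s3) = n.+1 ->
  s1 != s2 -> s3 != s1 -> s3 != s2 -> cdim (G t) = n ->
  sub G t s1 -> sub G t s2 -> sub G t s3 -> False.
Proof.
move=> rks1 rks2 rks3 s12 s31 s32 rkt ts1 ts2 ts3.
have := incid_opp rks1 rks2 s12 rkt ts1 ts2.
have := incid_opp rks3 rks1 s31 rkt ts3 ts1.
have := incid_opp rks3 rks2 s32 rkt ts3 ts2.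
by case: (incid_sign rks1 rkt ts1); lra.
Qed.

Lemma dtop_eq0 F t : (forall s, ~ (cdim (G s) = n.+1 /\ sub G t s)) -> dtop G l F t = 0.
Proof. by move=> no_s; rewrite /dtop big1 // => s _; rewrite incid_eq0 // scale0r. Qed.

Lemma dtop_single F t s : cdim (G s) = n.+1 -> sub G t s ->
  (forall s', cdim (G s') = n.+1 -> sub G t s' -> s' = s) ->
  dtop G l F t = incid G l s t *: F s.
Proof.
move=> rks ts s_uniq; rewrite /dtop (bigD1 s) //= big1 ?addr0 // => s' s's.
by rewrite incid_eq0 ?scale0r // => -[rks' ts']; move/eqP: s's; apply; apply: s_uniq.
Qed.

Lemma dtop_pair F t s1 s2 : cdim (G s1) = n.+1 -> cdim (G s2) = n.+1 -> s1 != s2 ->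
  cdim (G t) = n -> sub G t s1 -> sub G t s2 ->
  dtop G l F t = incid G l s1 t *: (F s1 - F s2).
Proof.
move=> rks1 rks2 s12 rkt ts1 ts2.
rewrite /dtop (bigD1 s1) //= (bigD1 s2) /=; last by rewrite eq_sym.
rewrite big1 ?addr0.
  by rewrite (incid_opp rks2 rks1 _ rkt ts2 ts1) 1?eq_sym // scalerBr scaleNr.
move=> s3 /andP [s31 s32]; rewrite incid_eq0 ?scale0r // => -[rks3 ts3].
exact: no_third_top_cone rks1 rks2 rks3 s12 s31 s32 rkt ts1 ts2 ts3.
Qed.

Lemma n_cone_boundary t : cdim (G t) = n -> in_boundary G t <-> in_one_facet G t.
Proof.
move=> rkt; split => [[t' [rkt' [tt' t'1]]]|t1]; first by rewrite (n_cone_sub_eq rkt rkt' tt').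
by exists t; do ! split.
Qed.

Lemma one_facet_unique t s : in_one_facet G t -> cdim (G s) = n.+1 -> sub G t s ->
  forall s', cdim (G s') = n.+1 -> sub G t s' -> s' = s.
Proof.
case=> s0 [_ [_ s0_uniq]] rks ts s' rks' ts'.
by rewrite (s0_uniq s' (top_cone_facet rks') ts') (s0_uniq s (top_cone_facet rks) ts).
Qed.

Lemma mdvdp0 (p : {mpoly R[n.+1]}) : mdvd p 0.
Proof. by exists 0; rewrite mul0r. Qed.

Lemma mdvd1p (p : {mpoly R[n.+1]}) : mdvd 1 p.
Proof. by exists p; rewrite mulr1. Qed.

Lemma mdvdZr (p q : {mpoly R[n.+1]}) (c : R) : c != 0 -> mdvd p (c *: q) <-> mdvd p q.
Proof.
move=> c_neq0; split=> [[r crE]|[r ->]]; last by exists (c *: r); rewrite scalerAl.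
by exists (c^-1 *: r); rewrite -scalerAl -crE scalerA mulVf // scale1r.
Qed.

Section Smoothness.
Variable alpha : 'I_m -> int.

Lemma lpow_Sm1 t : cdim (G t) = n -> in_Sm1 G alpha t -> lpow l alpha t = 1.
Proof.
move=> rkt [_ [t' [rkt' _ at'1 tt']]].
by rewrite /lpow (n_cone_sub_eq rkt rkt' tt') at'1 addNr /= expr0.
Qed.

Lemma in_J_mdvd t p : cdim (G t) = n -> ~ in_Sm1 G alpha t ->
  in_J G l alpha t p <-> mdvd (lpow l alpha t) p.
Proof.
move=> rkt notSm1; have not_top : cdim (G t) <> n.+1 by rewrite rkt => /eqP; rewrite ltn_eqF.
split=> [[[] //|[_ [q [q0 ->]]]]|[r ->]].
  exists (q t); rewrite (bigD1 t) //= big1 ?addr0 // => t' t't.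
  rewrite q0 ?mul0r // => -[rkt' [_ tt']]; move/eqP: t't; apply; symmetry.
  exact: n_cone_sub_eq.
right; split=> //; exists (fun t' => if t' == t then r else 0); split.
  by move=> t'; case: eqP => // ->; case; do ! split.
by rewrite (bigD1 t) //= eqxx big1 ?addr0 // => t' /negbTE ->; rewrite mul0r.
Qed.

Lemma Htop_spline F : Htop G l alpha F -> spline G l alpha F.
Proof.
case=> topF FJ; split=> // [s1 s2 t rks1 rks2 rkt s12t | s t rks rkt bt ts].
- have ts1 : sub G t s1 by move=> x /s12t [].
  have ts2 : sub G t s2 by move=> x /s12t [].
  have [<-|s12] := eqVneq s1 s2; first by rewrite subrr; apply: mdvdp0.
  have [Sm1|notSm1] := classic (in_Sm1 G alpha t); first by rewrite lpow_Sm1 //; apply: mdvd1p.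
  have := FJ t rkt notSm1; rewrite in_J_mdvd // (dtop_pair F rks1 rks2 s12 rkt ts1 ts2).
  by rewrite mdvdZr // incid_neq0.
- have [Sm1|notSm1] := classic (in_Sm1 G alpha t); first by rewrite lpow_Sm1 //; apply: mdvd1p.
  have := FJ t rkt notSm1; rewrite in_J_mdvd // (dtop_single F rks ts).
    by rewrite mdvdZr // incid_neq0.
  exact: one_facet_unique ((n_cone_boundary rkt).1 bt) rks ts.
Qed.

Lemma spline_Htop F : pure G -> spline G l alpha F -> Htop G l alpha F.
Proof.
move=> pureG [topF Fint Fbd]; split=> // t rkt notSm1; rewrite in_J_mdvd //.
have [[s1 [rks1 ts1]]|no_s] := classic (exists s, cdim (G s) = n.+1 /\ sub G t s); last first.
  by rewrite dtop_eq0; [apply: mdvdp0 | move=> s ts; apply: no_s; exists s].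
have [[s2 [rks2 ts2 s12]]|only_s1] :=
  classic (exists s2, [/\ cdim (G s2) = n.+1, sub G t s2 & s1 != s2]).
  rewrite (dtop_pair F rks1 rks2 s12 rkt ts1 ts2) mdvdZr ?incid_neq0 //.
  apply: (Fint s1 s2 t rks1 rks2 rkt) => x.
  split=> [[]|xt]; first exact: top_cones_meet rks1 s12 rkt ts1 ts2 x.
  by split; [apply: ts1 | apply: ts2].
have s1_uniq s : cdim (G s) = n.+1 -> sub G t s -> s = s1.
  move=> rks ts; apply/eqP/negPn/negP => ss1.
  by apply: only_s1; exists s; split; rewrite // eq_sym.
rewrite (dtop_single F rks1 ts1 s1_uniq) mdvdZr ?incid_neq0 //.
apply: Fbd => //; apply/(n_cone_boundary rkt); exists s1.
split; first exact: top_cone_facet.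
by split=> // s' s'_facet ts'; apply: s1_uniq => //; apply: pureG.
Qed.

End Smoothness.
End Fan.

Theorem lemma3p7 (R : realType) (n m : nat) (G : 'I_m -> seq 'rV[R]_(n.+1))
    (alpha : 'I_m -> int) (l : 'I_m -> 'rV[R]_(n.+1)) :
  is_fan G -> pure G -> hereditary G -> smoothness G alpha -> normals G l ->
  forall F : 'I_m -> {mpoly R[n.+1]},
    Htop G l alpha F <-> spline G l alpha F.
Proof.
move=> fanG pureG _ _ normG F; split; first exact: Htop_spline.
exact: spline_Htop.
Qed.
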